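(* Let $\hat P=\mathrm{Spec}(B)$ be an affine extension of a principal $\mathbb{G}_a$-bundle $P\to S_*$, with $D$ the locally nilpotent derivation of $B$ given by the $\mathbb{G}_a$-action. Then for every $\nu>0$ the zero locus in $S$ of the ideal $\mathfrak m_\nu(B)=D^\nu(\ker D^{\nu+1})\subset\mathcal O(S)$ is contained in $\{\mathbf x\}$; i.e. either all these ideals are $\mathfrak m_{\mathbf x}$-primary, or (in the remaining case) $\mathrm{gr}_D(B)=\mathcal O(S)[t]$.
   Context: All varieties are over $\mathbb{C}$. $S$ normal affine surface, $\mathbf{x}\in S$ a closed regular point with maximal ideal $\mathfrak m_{\mathbf x}$, $S_*=S\setminus\{\mathbf{x}\}$. An affine extension of $\pi\colon P\to S_*$ is a normal affine $\mathbb{G}_a$-variety $\hat P=\mathrm{Spec}(B)$ with a morphism $\hat\pi\colon\hat P\to S$ and a $\mathbb{G}_a$-equivariant dominant open embedding $\iota\colon P\hookrightarrow\hat P$ with $\iota(P)=\hat\pi^{-1}(S_* )$ and $\hat\pi\circ\iota=\pi$. Here $\ker D=\mathcal O(S)$. $\mathrm{gr}_D(B)=\bigoplus_\nu \ker D^{\nu+1}/\ker D^\nu\simeq\bigoplus_\nu\mathfrak m_\nu(B)t^\nu\subset\mathcal O(S)[t]$ via $b\mapsto \frac{D^\nu b}{\nu!}t^\nu$. *)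

From HB Require Import structures.
From mathcomp Require Import all_boot all_order all_algebra.
Set Implicit Arguments. Unset Strict Implicit. Unset Printing Implicit Defensive.
Import GRing.Theory.
Local Open Scope ring_scope.

Section AffineExtensions.
Context {F : fieldType} {B : comAlgType F}.

Definition is_domain : Prop := forall a b : B, a * b = 0 -> a = 0 \/ b = 0.

Inductive alg_gen (s : seq B) : B -> Prop :=
| ag_mem x : x \in s -> alg_gen s x
| ag_scal (c : F) : alg_gen s (c%:A)
| ag_add x y : alg_gen s x -> alg_gen s y -> alg_gen s (x + y)
| ag_mul x y : alg_gen s x -> alg_gen s y -> alg_gen s (x * y).

Definition fin_gen (R : B -> Prop) : Prop :=
  exists s : seq B, (forall x, x \in s -> R x) /\ (forall a, R a -> alg_gen s a).

(** the domain R is integrally closed in its fraction field (computed inside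
    Frac B): if a/c (a, c in R, c <> 0) is a root of a monic polynomial with
    coefficients in R, then c divides a in R *)
Definition int_closed (R : B -> Prop) : Prop :=
  forall a c, R a -> R c -> c <> 0 ->
  (exists (n : nat) (r : nat -> B), (forall i, R (r i)) /\
      a ^+ n + \sum_(i < n) r i * a ^+ i * c ^+ (n - i) = 0) ->
  exists d, R d /\ a = c * d.

Definition ideal_of (R I : B -> Prop) : Prop :=
  (forall x, I x -> R x) /\ I 0 /\ (forall x y, I x -> I y -> I (x + y)) /\
  (forall a x, R a -> I x -> I (a * x)).

Definition prime_ideal_of (R I : B -> Prop) : Prop :=
  ideal_of R I /\ ~ I 1 /\ (forall a b, R a -> R b -> I (a * b) -> I a \/ I b).

Definition maximal_ideal_of (R I : B -> Prop) : Prop :=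
  ideal_of R I /\ ~ I 1 /\
  (forall J, ideal_of R J -> (forall x, I x -> J x) ->
     (forall x, J x <-> I x) \/ J 1).

Definition same_set (I J : B -> Prop) : Prop := forall x, I x <-> J x.

Definition strict_incl (I J : B -> Prop) : Prop :=
  (forall x, I x -> J x) /\ exists x, J x /\ ~ I x.

Definition krull_dim2 (R : B -> Prop) : Prop :=
  (exists p0 p1 p2, prime_ideal_of R p0 /\ prime_ideal_of R p1 /\
     prime_ideal_of R p2 /\ strict_incl p0 p1 /\ strict_incl p1 p2) /\
  ~ (exists p0 p1 p2 p3, prime_ideal_of R p0 /\ prime_ideal_of R p1 /\
     prime_ideal_of R p2 /\ prime_ideal_of R p3 /\
     strict_incl p0 p1 /\ strict_incl p1 p2 /\ strict_incl p2 p3).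

Definition normal_affine_surface (R : B -> Prop) : Prop :=
  fin_gen R /\ int_closed R /\ krull_dim2 R.

Definition ideal_sq (m : B -> Prop) (y : B) : Prop :=
  exists s : seq (B * B), (forall p, p \in s -> m p.1 /\ m p.2) /\
    y = \sum_(p <- s) p.1 * p.2.

(** regularity of the closed point m of the surface: dim_F (m / m^2) = 2
    (the residue field is F, and the local ring has dimension 2) *)
Definition regular_point (m : B -> Prop) : Prop :=
  exists u v, m u /\ m v /\
    (forall y, m y -> exists al be : F, ideal_sq m (y - (al *: u + be *: v))) /\
    (forall al be : F, ideal_sq m (al *: u + be *: v) -> al = 0 /\ be = 0).

Definition is_derivation (D : B -> B) : Prop :=
  (forall a b, D (a + b) = D a + D b) /\ (forall (c : F) a, D (c *: a) = c *: D a) /\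
  (forall a b, D (a * b) = a * D b + D a * b).

Definition locally_nilpotent (D : B -> B) : Prop :=
  forall b, exists n, iter n D b = 0.

Definition kerD (D : B -> B) (b : B) : Prop := D b = 0.

(** m_nu(B) = D^nu (ker D^(nu+1)), a subset of ker D = O(S) *)
Definition m_nu (D : B -> B) (nu : nat) (a : B) : Prop :=
  exists b, iter nu.+1 D b = 0 /\ a = iter nu D b.

(** Spec B restricted over the basic open D(f) of S is D(f) x G_a, G_a acting
    by translation:  B_f = (ker D)_f [s] with D s = 1, where s = b / f^k. *)
Definition trivial_over (D : B -> B) (f : B) : Prop :=
  exists (b : B) (k : nat), D b = f ^+ k /\
    forall c : B, exists (N : nat) (r : seq B), (forall x, x \in r -> kerD D x) /\
      f ^+ N * c = \sum_(i < size r) r`_i * b ^+ i.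

(** Spec B over S_* = Spec(ker D) \ {m} is a principal G_a-bundle:
    every (scheme-theoretic) point of S_* has a trivializing basic open nbhd. *)
Definition principal_over_punctured (D : B -> B) (m : B -> Prop) : Prop :=
  forall p, prime_ideal_of (kerD D) p -> ~ same_set p m ->
    exists f, kerD D f /\ ~ p f /\ trivial_over D f.

End AffineExtensions.

(* If a prime ideal p of O(S) other than m_x contained m_nu(B), then p would
   miss some f along which the bundle is trivial: D b = f^k for some b in B.
   Then D^nu (b^nu) = nu! f^(k nu) lies in m_nu(B), hence in p, and as nu! is
   a unit in characteristic 0 and p is prime, f would lie in p. *)

From HB Require Import structures.
From mathcomp Require Import all_boot all_order all_algebra.
From Stdlib Require Import Classical.
From mathcomp Require Import ring.
Set Implicit Arguments. Unset Strict Implicit. Unset Printing Implicit Defensive.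
Import GRing.Theory.
Local Open Scope ring_scope.

Section Derivations.
Variables (F : fieldType) (B : comAlgType F) (D : B -> B).
Hypothesis HD : is_derivation D.

Lemma derivation0 : D 0 = 0.
Proof.
have [Dadd _] := HD; apply: (addrI (D 0)).
by rewrite addr0 -Dadd addr0.
Qed.

Lemma derivation1 : D 1 = 0.
Proof.
have [_ [_ Dmul]] := HD; apply: (addrI (D 1)).
by rewrite addr0 -[in RHS](mulr1 1) Dmul mulr1 mul1r.
Qed.

Lemma derivation_nat (n : nat) : D n%:R = 0.
Proof.
have [Dadd _] := HD.
elim: n => [|n IH]; first exact: derivation0.
by rewrite mulrS Dadd derivation1 IH add0r.
Qed.

Lemma derivation_scale1 (c : F) : D (c *: 1) = 0.
Proof. by have [_ [Dscal _]] := HD; rewrite Dscal derivation1 scaler0. Qed.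

Lemma derivation_mulCl (c x : B) : D c = 0 -> D (c * x) = c * D x.
Proof. by have [_ [_ Dmul]] := HD; move=> Dc; rewrite Dmul Dc mul0r addr0. Qed.

Lemma derivation_mulC (c d : B) : D c = 0 -> D d = 0 -> D (c * d) = 0.
Proof. by move=> Dc Dd; rewrite derivation_mulCl // Dd mulr0. Qed.

Lemma derivation_expC (c : B) (n : nat) : D c = 0 -> D (c ^+ n) = 0.
Proof.
move=> Dc; elim: n => [|n IH]; first exact: derivation1.
by rewrite exprS derivation_mulC.
Qed.

Lemma iter_derivation_mulCl (c x : B) (j : nat) :
  D c = 0 -> iter j D (c * x) = c * iter j D x.
Proof.
by move=> Dc; elim: j => [//|j IH]; rewrite !iterS IH derivation_mulCl.
Qed.

Section Slice.
Variables (b g : B).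
Hypotheses (Db : D b = g) (Dg : D g = 0).

Lemma derivation_slice_exp (n : nat) :
  D (b ^+ n.+1) = n.+1%:R * g * b ^+ n.
Proof.
have [_ [_ Dmul]] := HD.
elim: n => [|n IH]; first by rewrite expr1 expr0 mulr1 mul1r.
by rewrite exprS Dmul IH Db [n.+2%:R]mulrS [b ^+ n.+1]exprS; ring.
Qed.

Lemma iter_derivation_slice_exp (j : nat) :
  iter j D (b ^+ j) = j`!%:R * g ^+ j /\ iter j.+1 D (b ^+ j) = 0.
Proof.
elim: j => [|j [IH _]]; first by rewrite /= !expr0 derivation1 mulr1 fact0.
have top : iter j.+1 D (b ^+ j.+1) = j.+1`!%:R * g ^+ j.+1.
  rewrite iterSr derivation_slice_exp iter_derivation_mulCl; last first.
    by rewrite derivation_mulC ?derivation_nat.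
  by rewrite IH factS natrM exprSr; ring.
split=> //; rewrite iterS top.
by rewrite derivation_mulC ?derivation_nat ?derivation_expC.
Qed.

Lemma m_nu_slice (nu : nat) : m_nu D nu (nu`!%:R * g ^+ nu).
Proof.
have [top vanish] := iter_derivation_slice_exp nu.
by exists (b ^+ nu); rewrite vanish top.
Qed.

End Slice.
End Derivations.

Section PrimeIdeals.
Variables (F : fieldType) (B : comAlgType F) (R I : B -> Prop).
Hypothesis HI : prime_ideal_of R I.

Lemma prime_ideal_exp (x : B) (n : nat) :
  (forall m, R (x ^+ m)) -> I (x ^+ n) -> I x.
Proof.
have [_ [I1 Iprime]] := HI; move=> Rx.
have Rx1 : R x by have := Rx 1%N; rewrite expr1.
elim: n => [|n IH]; first by rewrite expr0 => /I1.
by rewrite exprS => /(Iprime _ _ Rx1 (Rx n)) [].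
Qed.

Lemma prime_ideal_scale_nat (n : nat) (y : B) :
  (n%:R : F) != 0 -> (forall c : F, R (c *: 1)) -> R y ->
  I (n%:R * y) -> I y.
Proof.
have [[_ [_ [_ Imul]]] [I1 Iprime]] := HI; move=> nz RF Ry.
have Rn : R n%:R by rewrite -scaler_nat.
case/(Iprime _ _ Rn Ry) => // In; case: I1.
have -> : (1 : B) = ((n%:R : F)^-1 *: 1) * n%:R.
  by rewrite -scalerAl mul1r -scaler_nat scalerA mulVf // scale1r.
exact: Imul.
Qed.

End PrimeIdeals.

Lemma prime_ideal_m_nu_trivial (F : fieldType) (HF : [pchar F] =i pred0)
    (B : comAlgType F) (D : B -> B) (HD : is_derivation D)
    (p : B -> Prop) (Hp : prime_ideal_of (kerD D) p) (nu : nat) (f : B) :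
  (forall a, m_nu D nu a -> p a) -> kerD D f -> trivial_over D f -> p f.
Proof.
move=> Hm Df [b [k [Db _]]].
have Dg : D (f ^+ k) = 0 by exact: derivation_expC.
have nz : (nu`!%:R : F) != 0 by rewrite (pcharf0P F).1 // -lt0n fact_gt0.
have pfk : p (f ^+ k).
  apply: (prime_ideal_exp (n := nu) Hp) => [m|]; first exact: derivation_expC.
  apply: (prime_ideal_scale_nat Hp nz) => [c||].
  - exact: (derivation_scale1 HD c).
  - exact: (derivation_expC HD nu Dg).
  - exact: (Hm _ (m_nu_slice HD Db Dg nu)).
exact: (prime_ideal_exp Hp (fun m => derivation_expC HD m Df) pfk).
Qed.

Theorem mainTheorem10
  (F : closedFieldType) (HF : [pchar F] =i pred0)
  (B : comAlgType F)
  (HBdom : @is_domain F B) (HBfg : fin_gen (fun _ : B => True))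
  (HBnorm : int_closed (fun _ : B => True))
  (D : B -> B) (HD : is_derivation D) (HDlnd : locally_nilpotent D)
  (HS : normal_affine_surface (kerD D))
  (mx : B -> Prop) (Hmx : maximal_ideal_of (kerD D) mx) (Hreg : regular_point mx)
  (Hbundle : principal_over_punctured D mx) :
  forall nu : nat, (0 < nu)%N ->
    forall p : B -> Prop, prime_ideal_of (kerD D) p ->
      (forall a, m_nu D nu a -> p a) -> same_set p mx.
Proof.
move=> nu _ p Hp Hm; apply: NNPP => p_neq_mx.
have [f [Df [pf trivial_f]]] := Hbundle p Hp p_neq_mx.
exact: pf (prime_ideal_m_nu_trivial HF HD Hp Hm Df trivial_f).
Qed.
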